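(* For a quantum sequence ensemble $\mathcal{E}=\bigotimes_{l=1}^{L}\mathcal{E}^{l}$, $\vec{x}=(x_{1},\ldots,x_{L})$ with $x_l\in\{1,\ldots,n_l\}$, and $E\in\mathbb{M}_{\vec{x}}(\mathcal{E})$, we have \[ \Big[\bigotimes_{l=1}^{L}\Pi_{x_{l}}^{\bot}(\mathcal{E}^{l})\Big]\Pi(\mathcal{E})E\Pi(\mathcal{E})\Big[\bigotimes_{l=1}^{L}\Pi_{x_{l}}^{\bot}(\mathcal{E}^{l})\Big]=\Pi(\mathcal{E})E\Pi(\mathcal{E}), \] where $\Pi(\mathcal{E})$ is the projection onto the support of $\rho_{0}$ and $\Pi_{x_{l}}^{\bot}(\mathcal{E}^{l})$ is the projection onto the kernel of $\mathcal{C}_{x_{l}}(\mathcal{E}^{l})\rho_{0}^{l}-\eta_{x_{l}}^{l}\rho_{x_{l}}^{l}$.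
   Context: Let $\mathcal{E}^{l}=\{\eta_{i}^{l},\rho_{i}^{l}\}_{i\in\{1,\ldots,n_{l}\}}$, $l=1,\ldots,L$, be quantum state ensembles (density operators on finite-dimensional Hilbert spaces, nonzero probabilities $\eta_i^l$), with average states $\rho_0^l=\sum_i\eta_i^l\rho_i^l$. The sequence ensemble $\mathcal{E}=\bigotimes_l\mathcal{E}^l=\{\eta_{\vec{c}},\rho_{\vec{c}}\}_{\vec{c}}$ has $\eta_{\vec{c}}=\prod_l\eta_{c_l}^l$, $\rho_{\vec{c}}=\bigotimes_l\rho_{c_l}^l$, and average state $\rho_0=\bigotimes_l\rho_0^l$. For an ensemble $\{\eta_i,\rho_i\}_i$ with average state $\rho_0$, the maximum confidence to identify $\rho_x$ is $\mathcal{C}_x=\max\eta_x\mathrm{Tr}(\rho_xM_x)/\mathrm{Tr}(\rho_0M_x)$ over measurements $\{M_?\}\cup\{M_i\}_i$ with $\mathrm{Tr}(\rho_0M_x)>0$; equivalently $\mathcal{C}_x=\min\{q\in\mathbb{R}\mid q\rho_0-\eta_x\rho_x\succeq0\}$. For the sequence ensemble, $\mathbb{M}_{\vec{x}}(\mathcal{E})=\{E\succeq0\mid \mathrm{Tr}[(\mathcal{C}_{\vec{x}}(\mathcal{E})\rho_0-\eta_{\vec{x}}\rho_{\vec{x}})E]=0\}$, the set of positive-semidefinite operators that can serve as the $\vec{x}$-th element of a maximum-confidence measurement. *)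

(* Quantum operators are square matrices over an arbitrary
   numClosedFieldType C (e.g. the complex numbers). *)
From HB Require Import structures.
From mathcomp Require Import all_boot all_order all_algebra.
Set Implicit Arguments.
Unset Strict Implicit.
Unset Printing Implicit Defensive.
Import Order.TTheory GRing.Theory Num.Theory.
Local Open Scope ring_scope.

Section QDefs.
Variable C : numClosedFieldType.

Definition adjmx m n (A : 'M[C]_(m, n)) : 'M[C]_(n, m) := (map_mx Num.conj A)^T.

Definition psd n (A : 'M[C]_n) : Prop :=
  adjmx A = A /\ forall v : 'cV[C]_n, 0 <= (adjmx v *m A *m v) 0 0.

Definition density n (A : 'M[C]_n) : Prop := psd A /\ \tr A = 1.

Definition proj_onto n (P : 'M[C]_n) (S : 'cV[C]_n -> Prop) : Prop :=
  [/\ adjmx P = P, P *m P = P & forall v, P *m v = v <-> S v].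

Definition supp n (A : 'M[C]_n) : 'cV[C]_n -> Prop :=
  fun v => exists w, v = A *m w.
Definition kern n (A : 'M[C]_n) : 'cV[C]_n -> Prop :=
  fun v => A *m v = 0.

Definition is_maxconf n (rho0 rhox : 'M[C]_n) (etax q : C) : Prop :=
  [/\ q \is Num.real, psd (q *: rho0 - etax *: rhox) &
      forall q', q' \is Num.real -> psd (q' *: rho0 - etax *: rhox) -> q <= q'].

Definition avg_state d k (eta : 'I_k -> C) (rho : 'I_k -> 'M[C]_d) : 'M[C]_d :=
  \sum_(i < k) eta i *: rho i.

(* M_x : operators that can be the x-th element of a max-confidence measurement *)
Definition Mset n (Cx : C) (rho0 rhox : 'M[C]_n) (etax : C) (E : 'M[C]_n) : Prop :=
  psd E /\ \tr ((Cx *: rho0 - etax *: rhox) *m E) = 0.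

(* Tensor products over L factors of dimensions d l: the product space has the
   basis indexed by sequences (i_l)_l, encoded in 'I_(#|seqidx d|) via enum_val. *)
Definition seqidx L (d : 'I_L -> nat) := {dffun forall l : 'I_L, 'I_(d l)}.
Definition tdim L (d : 'I_L -> nat) : nat := #|{: seqidx d}|.

Definition tens L (d : 'I_L -> nat) (A : forall l : 'I_L, 'M[C]_(d l))
  : 'M[C]_(tdim d) :=
  \matrix_(i, j) \prod_(l : 'I_L)
     A l ((enum_val i : seqidx d) l) ((enum_val j : seqidx d) l).

End QDefs.

From mathcomp Require Import all_boot all_order all_algebra.
From mathcomp Require Import spectral.
From Stdlib Require Import Classical.
Set Implicit Arguments. Unset Strict Implicit. Unset Printing Implicit Defensive.
Import Order.TTheory GRing.Theory Num.Theory.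
Local Open Scope ring_scope.

(* The maximum confidence is multiplicative, C_x(E) = prod_l C_{x_l}(E^l): "<=" because
   (x)_l a_l - (x)_l b_l >= 0 whenever a_l >= b_l >= 0, and ">=" by testing against product
   vectors.  Hence M := C_x rho_0 - eta_x rho_x is (x)_l a_l - (x)_l b_l with
   a_l = C_{x_l} rho_0^l and b_l = eta_{x_l} rho_{x_l}^l.  Since M, E >= 0 and Tr(M E) = 0,
   we get M E = 0, and since ker rho_0 is contained in ker M, every column z of Pi E lies in
   supp rho_0 /\ ker M.  Writing M as a_1 (x) ... (x) (a_m - b_m) (x) ... (x) a_L plus a
   positive remainder shows that (a_m - b_m) (x) 1 kills z (z being in the support of rho_0), so
   Pi^perp_{x_m} (x) 1 fixes z for every m.  Thus (x)_l Pi^perp_{x_l} fixes Pi E, and taking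
   adjoints deals with the right-hand factor. *)

Lemma bigA_distr_bigA_dep (R : comNzRingType) (I : finType) (T_ : I -> finType)
    (F : forall i, T_ i -> R) :
  \prod_(i : I) \sum_(j : T_ i) F i j =
  \sum_(f : {dffun forall i, T_ i}) \prod_(i : I) F i (f i).
Proof.
rewrite (eq_bigr (fun i => \sum_(j in tagged_with T_ i) untag 0 (F i) j)); last first.
  by move=> i _; rewrite (big_tag F).
rewrite bigA_distr_big_dep.
have /esym sum_fprod := @big_fprod R 0 1 *%R +%R I T_ (fun i => [ffun j => F i j]).
transitivity (\sum_(t : fprod T_) \prod_(i in I) [ffun j => F i j] (t i)).
  rewrite -sum_fprod; apply: eq_big => [g|g _]; first by apply/familyP/familyP.
  apply: eq_bigr => i _.
  by case: (g i) => k t /=; rewrite /untag; case: eqP => //= e; rewrite ffunE.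
rewrite (reindex (@fprod_of_dffun I T_)); last exact/onW_bij/fprod_of_dffun_bij.
by apply: eq_bigr => f _; apply: eq_bigr => i _; rewrite ffunE /fprod_of_dffun fprodE.
Qed.

Section Adjoint.
Variable C : numClosedFieldType.

Lemma adjmxE m n (A : 'M[C]_(m, n)) i j : adjmx A i j = (A j i)^*.
Proof. by rewrite /adjmx !mxE. Qed.

Lemma adjmxM m n p (A : 'M[C]_(m, n)) (B : 'M[C]_(n, p)) :
  adjmx (A *m B) = adjmx B *m adjmx A.
Proof. by rewrite /adjmx map_mxM trmx_mul. Qed.

Lemma adjmxK m n (A : 'M[C]_(m, n)) : adjmx (adjmx A) = A.
Proof. by apply/matrixP => i j; rewrite !adjmxE conjCK. Qed.

Lemma adjmxD m n (A B : 'M[C]_(m, n)) : adjmx (A + B) = adjmx A + adjmx B.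
Proof. by apply/matrixP => i j; rewrite !(adjmxE, mxE) rmorphD. Qed.

Lemma adjmxZ m n a (A : 'M[C]_(m, n)) : adjmx (a *: A) = a^* *: adjmx A.
Proof. by apply/matrixP => i j; rewrite !(adjmxE, mxE) rmorphM. Qed.

Lemma adjmxB m n (A B : 'M[C]_(m, n)) : adjmx (A - B) = adjmx A - adjmx B.
Proof. by rewrite adjmxD -scaleN1r adjmxZ rmorphN1 scaleN1r. Qed.

Lemma adjmx0 m n : adjmx (0 : 'M[C]_(m, n)) = 0.
Proof. by apply/matrixP => i j; rewrite adjmxE !mxE conjC0. Qed.

Lemma adjmx1 n : adjmx (1%:M : 'M[C]_n) = 1%:M.
Proof. by apply/matrixP => i j; rewrite adjmxE !mxE eq_sym conjC_nat. Qed.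

Lemma adjmx_delta m n (i : 'I_m) (j : 'I_n) :
  adjmx (delta_mx i j) = delta_mx j i :> 'M[C]_(n, m).
Proof. by apply/matrixP => a b; rewrite adjmxE !mxE conjC_nat andbC. Qed.

Lemma adjmx_diag n (v : 'rV[C]_n) : adjmx (diag_mx v) = diag_mx (map_mx Num.conj v).
Proof.
apply/matrixP => a b; rewrite adjmxE !mxE eq_sym.
by case: eqP => [->|_]; rewrite ?mulr1n ?mulr0n ?rmorph0.
Qed.

Lemma adjmx_trC m n (A : 'M[C]_(m, n)) : map_mx Num.conj A^T = adjmx A.
Proof. by rewrite /adjmx map_trmx. Qed.

Lemma eq_mx_col m n (X Y : 'M[C]_(m, n)) :
  (forall j, X *m delta_mx j (0 : 'I_1) = Y *m delta_mx j 0) -> X = Y.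
Proof.
by move=> XY; apply/matrixP => a b; have /matrixP/(_ a 0) := XY b; rewrite -!colE !mxE.
Qed.

End Adjoint.

Section PositiveSemidefinite.
Variable C : numClosedFieldType.

Definition quad n (A : 'M[C]_n) (v : 'cV[C]_n) : C := (adjmx v *m A *m v) 0 0.

Lemma quadD n (A B : 'M[C]_n) v : quad (A + B) v = quad A v + quad B v.
Proof. by rewrite /quad mulmxDr mulmxDl mxE. Qed.

Lemma quadZ n a (A : 'M[C]_n) v : quad (a *: A) v = a * quad A v.
Proof. by rewrite /quad -scalemxAr -scalemxAl mxE. Qed.

Lemma quadB n (A B : 'M[C]_n) v : quad (A - B) v = quad A v - quad B v.
Proof. by rewrite -scaleN1r quadD quadZ mulN1r. Qed.

Lemma quadE n (A : 'M[C]_n) w :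
  quad A w = \sum_j \sum_i (w i 0)^* * A i j * w j 0.
Proof.
rewrite /quad mxE; apply: eq_bigr => j _; rewrite mxE mulr_suml.
by apply: eq_bigr => i _; rewrite adjmxE.
Qed.

Lemma quad_ker n (A : 'M[C]_n) v : A *m v = 0 -> quad A v = 0.
Proof. by rewrite /quad -mulmxA => ->; rewrite mulmx0 mxE. Qed.

Lemma quad_delta n (A : 'M[C]_n) i : quad A (delta_mx i 0) = A i i.
Proof. by rewrite /quad adjmx_delta -rowE -colE !mxE. Qed.

Lemma quad_herm_real n (A : 'M[C]_n) v : adjmx A = A -> quad A v \is Num.real.
Proof.
move=> hA; rewrite CrealE; apply/eqP.
by rewrite -[LHS]adjmxE !adjmxM adjmxK hA mulmxA.
Qed.

Lemma adjmx_mul_ge0 n (w : 'cV[C]_n) : 0 <= (adjmx w *m w) 0 0.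
Proof.
by rewrite mxE sumr_ge0 // => i _; rewrite adjmxE mulrC mul_conjC_ge0.
Qed.

Lemma adjmx_mul_eq0 n (w : 'cV[C]_n) : (adjmx w *m w) 0 0 = 0 -> w = 0.
Proof.
rewrite mxE => /eqP; rewrite psumr_eq0 => [/allP w0|i _]; last first.
  by rewrite adjmxE mulrC mul_conjC_ge0.
apply/matrixP => i j; rewrite ord1 mxE; have /eqP := w0 i (mem_index_enum _).
by rewrite adjmxE mulrC => /eqP; rewrite mul_conjC_eq0 => /eqP.
Qed.

Lemma herm_sqr_mulmx_eq0 n (V : 'M[C]_n) (y : 'cV[C]_n) :
  adjmx V = V -> V *m V *m y = 0 -> V *m y = 0.
Proof.
move=> hV VVy; apply: adjmx_mul_eq0.
by rewrite adjmxM hV -mulmxA [V *m (V *m y)]mulmxA VVy mulmx0 mxE.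
Qed.

Lemma psd_gram m n (B : 'M[C]_(m, n)) : psd (adjmx B *m B).
Proof.
split=> [|v]; first by rewrite adjmxM adjmxK.
by rewrite mulmxA -mulmxA -adjmxM adjmx_mul_ge0.
Qed.

(* The spectral theorem [A = U^* D U] with [D >= 0] gives [A = B^* B] for
   [B = sqrt(D) U]. *)
Definition gram_factor n (A : 'M[C]_n) : 'M[C]_n :=
  diag_mx (map_mx sqrtC (spectral_diag A)) *m spectralmx A.

Lemma gram_factorP n (A : 'M[C]_n) :
  psd A -> A = adjmx (gram_factor A) *m gram_factor A.
Proof.
move=> [hA pA].
have /orthomx_spectralP : A \is normalmx.
  by apply/hermitian_normalmx/is_hermitianmxP; rewrite expr0 scale1r adjmx_trC hA.
have /unitarymxP := spectral_unitarymx A.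
rewrite invmx_unitary ?spectral_unitarymx // !adjmx_trC.
set U := spectralmx A; set D := spectral_diag A => UU AE.
have D_ge0 i : 0 <= D 0 i.
  have := pA (adjmx U *m delta_mx i 0).
  rewrite adjmxM adjmxK adjmx_delta AE !mulmxA -!(mulmxA _ U (adjmx U)) UU !mulmx1.
  by rewrite -rowE -colE !mxE eqxx mulr1n.
rewrite /gram_factor adjmxM adjmx_diag -/U -/D [_ *m (_ *m U)]mulmxA -(mulmxA (adjmx U)).
rewrite mulmx_diag {1}AE.
congr (_ *m diag_mx _ *m _); apply/matrixP => a b.
by rewrite !mxE ord1 conj_Creal ?ger0_real ?sqrtC_ge0 // -expr2 sqrtCK.
Qed.

Lemma psd_herm n (A : 'M[C]_n) : psd A -> adjmx A = A.
Proof. by case. Qed.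

Lemma psd_quad_ge0 n (A : 'M[C]_n) v : psd A -> 0 <= quad A v.
Proof. by case=> _; apply. Qed.

Lemma psd_quad_eq0 n (A : 'M[C]_n) v : psd A -> quad A v = 0 -> A *m v = 0.
Proof.
move=> /gram_factorP ->; rewrite /quad mulmxA -mulmxA -adjmxM => /adjmx_mul_eq0 Bv0.
by rewrite -mulmxA Bv0 mulmx0.
Qed.

Lemma psd_mulmx_eq0 n (M E : 'M[C]_n) :
  psd M -> psd E -> \tr (M *m E) = 0 -> M *m E = 0.
Proof.
move=> pM /gram_factorP ->; set B := gram_factor E.
have diagE i : (B *m (M *m adjmx B)) i i = quad M (adjmx B *m delta_mx i 0).
  by rewrite -quad_delta /quad adjmxM adjmxK adjmx_delta !mulmxA.
rewrite mulmxA mxtrace_mulC => /eqP; rewrite psumr_eq0 => [/allP tr0|i _]; last first.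
  by rewrite diagE psd_quad_ge0.
suff -> : M *m adjmx B = 0 by rewrite mul0mx.
apply: eq_mx_col => j; rewrite mul0mx -mulmxA; apply: (psd_quad_eq0 pM).
by rewrite -diagE; apply/eqP/tr0/mem_index_enum.
Qed.

Lemma psd0 n : psd (0 : 'M[C]_n).
Proof.
by split=> [|v]; rewrite ?adjmx0 // mulmx0 mul0mx mxE.
Qed.

Lemma psdD n (A B : 'M[C]_n) : psd A -> psd B -> psd (A + B).
Proof.
move=> [hA pA] [hB pB]; split=> [|v]; first by rewrite adjmxD hA hB.
by rewrite -/(quad _ v) quadD addr_ge0 //; [apply: pA | apply: pB].
Qed.

Lemma psdZ n c (A : 'M[C]_n) : 0 <= c -> psd A -> psd (c *: A).
Proof.
move=> c_ge0 [hA pA]; split=> [|v]; first by rewrite adjmxZ hA conj_Creal ?ger0_real.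
by rewrite -/(quad _ v) quadZ mulr_ge0 //; apply: pA.
Qed.

Lemma psd_sum n (I : finType) (P : pred I) (F : I -> 'M[C]_n) :
  (forall i, P i -> psd (F i)) -> psd (\sum_(i | P i) F i).
Proof. by move=> pF; apply: big_ind => //; [exact: psd0 | exact: psdD]. Qed.

Lemma psd_tr_ge0 n (A : 'M[C]_n) : psd A -> 0 <= \tr A.
Proof.
by move=> [_ pA]; rewrite sumr_ge0 // => i _; rewrite -quad_delta; apply: pA.
Qed.

Lemma herm_not_psd n (A : 'M[C]_n) :
  adjmx A = A -> ~ psd A -> exists v, quad A v < 0.
Proof.
move=> hA npA; apply: NNPP => nv; apply: npA; split=> // v.
by rewrite -/(quad _ v) real_leNgt ?quad_herm_real //; apply/negP => Av; apply: nv; exists v.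
Qed.

Lemma psd_scaleB_ker n (c e : C) (R S : 'M[C]_n) (z : 'cV[C]_n) :
  psd (c *: R - e *: S) -> psd S -> 0 < e -> R *m z = 0 -> (c *: R - e *: S) *m z = 0.
Proof.
move=> pM pS e_gt0 Rz.
have Sz : S *m z = 0.
  apply: (psd_quad_eq0 pS); apply/eqP; rewrite eq_le psd_quad_ge0 // andbT.
  have := psd_quad_ge0 z pM; rewrite quadB !quadZ (quad_ker Rz) mulr0 sub0r oppr_ge0.
  by rewrite pmulr_rle0.
by rewrite mulmxBl -!scalemxAl Rz Sz !scaler0 subrr.
Qed.

End PositiveSemidefinite.

Section Projections.
Variable C : numClosedFieldType.

Lemma proj_ker_compl_sub n (P A : 'M[C]_n) : proj_onto P (kern A) -> (1%:M - P <= A)%MS.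
Proof.
move=> [_ _ Pker]; rewrite submxE; apply/eqP/eq_mx_col => j.
rewrite mul0mx -mulmxA mulmxBl mul1mx (Pker _).2 ?subrr //.
by rewrite /kern mulmxA mulmx_coker mul0mx.
Qed.

Lemma proj_supp_mulmx n (R N Pi : 'M[C]_n) :
  adjmx R = R -> proj_onto Pi (supp R) -> (forall z : 'cV_n, R *m z = 0 -> N *m z = 0) ->
  N *m Pi = N.
Proof.
move=> hR [hPi _ Psupp] RN.
have PiR : Pi *m R = R.
  by apply: eq_mx_col => j; rewrite -mulmxA; apply/Psupp; exists (delta_mx j 0).
have R_compl : R *m (1%:M - Pi) = 0.
  have compl_R : (1%:M - Pi) *m R = 0 by rewrite mulmxBl mul1mx PiR subrr.
  by have := congr1 (@adjmx C n n) compl_R; rewrite adjmxM adjmxB adjmx1 hPi hR adjmx0.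
suff : N *m (1%:M - Pi) = 0 by rewrite mulmxBr mulmx1 => /eqP; rewrite subr_eq0 => /eqP.
by apply: eq_mx_col => j; rewrite mul0mx -mulmxA RN // mulmxA R_compl mul0mx.
Qed.

Lemma proj_sandwich n (Q Pi E M : 'M[C]_n) :
  adjmx Q = Q -> adjmx Pi = Pi -> Pi *m Pi = Pi -> adjmx E = E ->
  M *m Pi = M -> M *m E = 0 -> (forall z : 'cV_n, Pi *m z = z -> M *m z = 0 -> Q *m z = z) ->
  Q *m Pi *m E *m Pi *m Q = Pi *m E *m Pi.
Proof.
move=> hQ hPi PiPi hE MPi ME Qfix.
have QPiE : Q *m (Pi *m E) = Pi *m E.
  apply: eq_mx_col => j; rewrite -mulmxA; apply: Qfix; first by rewrite !mulmxA PiPi.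
  by rewrite !mulmxA MPi ME !mul0mx.
have QPiEPi : Q *m (Pi *m E *m Pi) = Pi *m E *m Pi by rewrite mulmxA QPiE.
have PiEPiQ : Pi *m E *m Pi *m Q = Pi *m E *m Pi.
  by have := congr1 (@adjmx _ _ _) QPiEPi; rewrite !adjmxM hQ hPi hE !mulmxA.
by rewrite -(mulmxA Q) QPiE PiEPiQ.
Qed.

End Projections.

Section Tensor.
Variables (C : numClosedFieldType) (L : nat) (d : 'I_L -> nat).
Local Notation T := (seqidx d).
Local Notation ev i := (enum_val i : T).
Local Notation mx1s := (fun l : 'I_L => 1%:M : 'M[C]_(d l)).
Implicit Types A B H X Y P : forall l, 'M[C]_(d l).

Lemma big_tdim (F : T -> C) : \sum_(k < tdim d) F (ev k) = \sum_(f : T) F f.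
Proof. by rewrite -(big_enum_val F). Qed.

Lemma eq_tens A B : (forall l, A l = B l) -> tens A = tens B.
Proof.
by move=> AB; apply/matrixP => i j; rewrite !mxE; apply: eq_bigr => l _; rewrite AB.
Qed.

Lemma tensM A B : tens A *m tens B = tens (fun l => A l *m B l).
Proof.
apply/matrixP => i j; rewrite !mxE; under [RHS]eq_bigr do rewrite mxE.
rewrite bigA_distr_bigA_dep.
rewrite -(big_tdim (fun f => \prod_l (A l (ev i l) (f l) * B l (f l) (ev j l)))).
by apply: eq_bigr => k _; rewrite !mxE big_split.
Qed.

Lemma tensZ (c : 'I_L -> C) A : tens (fun l => c l *: A l) = (\prod_l c l) *: tens A.
Proof.
by apply/matrixP => i j; rewrite !mxE -big_split; apply: eq_bigr => l _; rewrite mxE.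
Qed.

Lemma tens1 : tens mx1s = 1%:M.
Proof.
apply/matrixP => i j; rewrite !mxE; have [<-|nij] := eqVneq i j.
  by rewrite mulr1n big1 // => l _; rewrite mxE eqxx.
have [l nl] : exists l, ev i l != ev j l.
  apply/existsP; apply: contraR nij => /existsPn ij; apply/eqP/enum_val_inj/ffunP => l.
  by apply/eqP; rewrite -[_ == _]negbK ij.
by rewrite mulr0n (bigD1 l) //= mxE (negbTE nl) mul0r.
Qed.

Lemma adjmx_tens A : adjmx (tens A) = tens (fun l => adjmx (A l)).
Proof.
apply/matrixP => i j; rewrite adjmxE !mxE rmorph_prod.
by apply: eq_bigr => l _; rewrite adjmxE.
Qed.

Lemma psd_tens A : (forall l, psd (A l)) -> psd (tens A).
Proof.
move=> pA; rewrite (eq_tens (fun l => gram_factorP (pA l))).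
by rewrite -tensM -adjmx_tens; exact: psd_gram.
Qed.

Definition upd (m : 'I_L) X A l : 'M[C]_(d l) := if l == m then X l else A l.

Lemma tens_upd_id m A : tens (upd m A A) = tens A.
Proof. by apply: eq_tens => l; rewrite /upd; case: ifP. Qed.

Lemma tens_updB m X Y A :
  tens (upd m (fun l => X l - Y l) A) = tens (upd m X A) - tens (upd m Y A).
Proof.
have split_m Z i j : tens (upd m Z A) i j =
    Z m (ev i m) (ev j m) * \prod_(l | l != m) A l (ev i l) (ev j l).
  rewrite mxE (bigD1 m) //= /upd eqxx; congr (_ * _).
  by apply: eq_bigr => l /negbTE ->.
by apply/matrixP => i j; rewrite [RHS]mxE [X in _ + X]mxE !split_m !mxE mulrDl mulNr.
Qed.

Lemma psd_tensB X Y :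
  (forall l, psd (Y l)) -> (forall l, psd (X l - Y l)) -> psd (tens X - tens Y).
Proof.
move=> pY pXY; have pX l : psd (X l) by rewrite -(subrK (Y l) (X l)); apply: psdD.
pose XY (s : seq 'I_L) l := if l \in s then X l else Y l.
suff /(_ (enum 'I_L)) : forall s, psd (tens (XY s) - tens Y).
  by rewrite (eq_tens (B := X)) // => l; rewrite /XY mem_enum.
elim=> [|m s IH]; first by rewrite (eq_tens (B := Y)) ?subrr //; exact: psd0.
have [ms|nms] := boolP (m \in s).
  rewrite (eq_tens (B := XY s)) // => l.
  by rewrite /XY in_cons; case: eqP => // ->; rewrite ms.
have eXs : tens (upd m X (XY s)) = tens (XY (m :: s)).
  by apply: eq_tens => l; rewrite /upd /XY in_cons; case: eqP.
have eYs : tens (upd m Y (XY s)) = tens (XY s).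
  by apply: eq_tens => l; rewrite /upd /XY; case: eqP => // ->; rewrite (negbTE nms).
have -> : tens (XY (m :: s)) - tens Y =
    tens (upd m (fun l => X l - Y l) (XY s)) + (tens (XY s) - tens Y).
  by rewrite tens_updB eXs eYs addrA subrK.
apply: psdD => //; apply: psd_tens => l.
by rewrite /upd /XY; case: ifP => // _; case: ifP.
Qed.

Definition tensv (v : forall l, 'cV[C]_(d l)) : 'cV[C]_(tdim d) :=
  \col_i \prod_l v l (ev i l) 0.

Lemma quad_tensv A v : quad (tens A) (tensv v) = \prod_l quad (A l) (v l).
Proof.
under [RHS]eq_bigr do rewrite quadE.
rewrite bigA_distr_bigA_dep; under [RHS]eq_bigr do rewrite bigA_distr_bigA_dep.
rewrite quadE -big_tdim; apply: eq_bigr => j _; rewrite -big_tdim.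
by apply: eq_bigr => i _; rewrite !mxE rmorph_prod -!big_split.
Qed.

Lemma tens_fix_by_factors P (u : 'cV[C]_(tdim d)) :
  (forall m, tens (upd m P mx1s) *m u = u) -> tens P *m u = u.
Proof.
move=> Pu; pose Ps (s : seq 'I_L) l := if l \in s then P l else 1%:M.
suff /(_ (enum 'I_L) (enum_uniq _)) : forall s, uniq s -> tens (Ps s) *m u = u.
  by rewrite (eq_tens (B := P)) // => l; rewrite /Ps mem_enum.
elim=> [|m s IH] /=; first by rewrite (eq_tens (B := mx1s)) // tens1 mul1mx.
move=> /andP[nms /IH sP].
have -> : tens (Ps (m :: s)) = tens (Ps s) *m tens (upd m P mx1s).
  rewrite tensM; apply: eq_tens => l; rewrite /Ps /upd in_cons.
  by case: eqP => [->|_] /=; rewrite ?(negbTE nms) ?mul1mx ?mulmx1.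
by rewrite -mulmxA Pu.
Qed.

Lemma tensB_quad_eq0 m A B (u : 'cV[C]_(tdim d)) :
  (forall l, psd (B l)) -> (forall l, psd (A l - B l)) ->
  quad (tens A - tens B) u = 0 -> tens (upd m (fun l => A l - B l) A) *m u = 0.
Proof.
move=> pB pAB quad0; have pA l : psd (A l) by rewrite -(subrK (B l) (A l)); apply: psdD.
have pHead : psd (tens (upd m (fun l => A l - B l) A)).
  by apply: psd_tens => l; rewrite /upd; case: ifP.
have pTail : psd (tens (upd m B A) - tens B).
  apply: psd_tensB => // l; rewrite /upd; case: ifP => // _.
  by rewrite subrr; exact: psd0.
have split_AB : tens A - tens B =
    tens (upd m (fun l => A l - B l) A) + (tens (upd m B A) - tens B).
  by rewrite tens_updB tens_upd_id addrA subrK.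
apply: (psd_quad_eq0 pHead); apply/eqP.
move: quad0; rewrite split_AB quadD => /eqP.
by rewrite paddr_eq0 ?psd_quad_ge0 // => /andP[].
Qed.

(* Both sides factor through the hermitian [V] below, and [V^2 y = 0] forces [V y = 0]. *)
Lemma tens_upd_herm_cancel m Y H (w : 'cV[C]_(tdim d)) :
  (forall l, adjmx (H l) = H l) ->
  tens (upd m Y H) *m (tens H *m w) = 0 -> tens (upd m Y mx1s) *m (tens H *m w) = 0.
Proof.
move=> hH; set V := tens (upd m mx1s H); set Z := tens (upd m (fun l => Y l *m H l) mx1s).
have hV : adjmx V = V.
  by rewrite adjmx_tens; apply: eq_tens => l; rewrite /upd; case: ifP; rewrite ?adjmx1.
have -> : tens (upd m Y H) *m (tens H *m w) = V *m V *m (Z *m w).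
  rewrite mulmxA tensM !mulmxA !tensM; congr (_ *m _); apply: eq_tens => l.
  by rewrite /upd; case: ifP; rewrite ?mul1mx ?mulmx1.
move=> /(herm_sqr_mulmx_eq0 hV) <-.
rewrite mulmxA tensM mulmxA tensM; congr (_ *m _); apply: eq_tens => l.
by rewrite /upd; case: ifP; rewrite ?mul1mx ?mulmx1.
Qed.

Lemma tens_upd_proj_fix m A P (u : 'cV[C]_(tdim d)) :
  (1%:M - P m <= A m)%MS -> tens (upd m A mx1s) *m u = 0 -> tens (upd m P mx1s) *m u = u.
Proof.
move=> /mulmxKpV PA Au0; pose K l := (1%:M - P l) *m pinvmx (A l).
have : tens (upd m (fun l => 1%:M - P l) mx1s) *m u = 0.
  have -> : tens (upd m (fun l => 1%:M - P l) mx1s) =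
      tens (upd m K mx1s) *m tens (upd m A mx1s).
    rewrite tensM; apply: eq_tens => l; rewrite /upd.
    by case: eqP => [->|_]; rewrite ?PA ?mulmx1.
  by rewrite -mulmxA Au0 mulmx0.
rewrite tens_updB tens_upd_id tens1 mulmxBl mul1mx => /eqP.
by rewrite subr_eq0 => /eqP <-.
Qed.

Lemma tens_ker_proj_fixed (rho0 B P : forall l, 'M[C]_(d l)) (c : 'I_L -> C)
    (w : 'cV[C]_(tdim d)) :
  (forall l, psd (rho0 l)) -> (forall l, psd (B l)) ->
  (forall l, psd (c l *: rho0 l - B l)) -> (forall l, 0 < c l) ->
  (forall l, proj_onto (P l) (kern (c l *: rho0 l - B l))) ->
  (tens (fun l => c l *: rho0 l) - tens B) *m (tens rho0 *m w) = 0 ->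
  tens P *m (tens rho0 *m w) = tens rho0 *m w.
Proof.
move=> prho0 pB pdom c_gt0 Pker Mu0; apply: tens_fix_by_factors => m.
pose A l := c l *: rho0 l - B l; pose c' l := if l == m then 1 else c l.
apply: (tens_upd_proj_fix (A := A)); first exact: proj_ker_compl_sub.
apply: tens_upd_herm_cancel => [l|]; first exact: psd_herm.
have c'_neq0 : \prod_l c' l != 0.
  by apply/prodf_neq0 => l _; rewrite /c'; case: ifP => _; rewrite ?oner_neq0 ?gt_eqF ?c_gt0.
have := tensB_quad_eq0 m pB pdom (quad_ker Mu0).
have -> : tens (upd m (fun l => c l *: rho0 l - B l) (fun l => c l *: rho0 l)) =
    (\prod_l c' l) *: tens (upd m A rho0).
  by rewrite -tensZ; apply: eq_tens => l; rewrite /upd /c'; case: ifP; rewrite ?scale1r.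
by rewrite -scalemxAl => /eqP; rewrite scaler_eq0 (negbTE c'_neq0) => /eqP.
Qed.

End Tensor.

Section MaxConfidence.
Variable C : numClosedFieldType.

Lemma psd_scaleB_herm n (q e : C) (R S : 'M[C]_n) :
  psd R -> psd S -> q \is Num.real -> e \is Num.real ->
  adjmx (q *: R - e *: S) = q *: R - e *: S.
Proof.
by move=> /psd_herm hR /psd_herm hS qr er; rewrite adjmxB !adjmxZ !conj_Creal // hR hS.
Qed.

Lemma psd_scaleB_tr n (q e : C) (R S : 'M[C]_n) :
  \tr R = 1 -> \tr S = 1 -> psd (q *: R - e *: S) -> e <= q.
Proof.
move=> trR trS /psd_tr_ge0.
by rewrite linearB /= !linearZ /= trR trS !mulr1 subr_ge0.
Qed.

Lemma is_maxconf_uniq n (R S : 'M[C]_n) e q q' :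
  is_maxconf R S e q -> is_maxconf R S e q' -> q = q'.
Proof.
by move=> [qr pq minq] [q'r pq' minq']; apply/le_anti; rewrite minq // minq'.
Qed.

Lemma exists_pow_gap (c p : C) k :
  c \is Num.real -> 0 < p -> c < p -> exists s, [/\ 0 <= s, s < 1 & c < s ^+ k * p].
Proof.
move=> c_real p_gt0 c_lt_p; have [->|k_gt0] := posnP k.
  by exists 0; rewrite expr0 mul1r lexx ltr01.
pose t := if 0 <= c then c / p else 0.
have t_ge0 : 0 <= t by rewrite /t; case: ifP => // c_ge0; rewrite divr_ge0 // ltW.
have t_lt1 : t < 1 by rewrite /t; case: ifP => // _; rewrite ltr_pdivrMr // mul1r.
have c_le : c <= t * p.
  rewrite /t; case: ifP => [_|c_lt0]; first by rewrite divfK ?gt_eqF.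
  by rewrite mul0r ltW // real_ltNge ?real0 ?c_lt0.
have [tu u1] := midf_lt t_lt1; set u := (t + 1) / 2 in tu u1.
have u_ge0 : 0 <= u := le_trans t_ge0 (ltW tu).
exists (k.-root u); split; first by rewrite rootC_ge0.
  rewrite real_ltNge ?ger0_real ?rootC_ge0 //; apply/negP => /(exprn_ege1 k).
  by rewrite rootCK // => /(lt_le_trans u1); rewrite ltxx.
by rewrite rootCK //; apply: le_lt_trans c_le _; rewrite ltr_pM2r.
Qed.

Section ProductEnsemble.
Variables (L : nat) (d : 'I_L -> nat).
Variables (rho0 rhox : forall l, 'M[C]_(d l)) (e q : 'I_L -> C).
Hypothesis rho0_psd : forall l, psd (rho0 l).
Hypothesis rhox_psd : forall l, psd (rhox l).
Hypothesis rho0_dom : forall l, psd (rho0 l - e l *: rhox l).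
Hypothesis e_gt0 : forall l, 0 < e l.
Hypothesis q_gt0 : forall l, 0 < q l.
Hypothesis q_maxconf : forall l, is_maxconf (rho0 l) (rhox l) (e l) (q l).

(* If [c < prod q], shrink every [q l] by a common factor [s < 1] with [c < s^L prod q]; the
   minimality of [q l] yields vectors [v l] violating the shrunken inequalities, and their
   tensor product then violates the one for [c]. *)
Lemma is_maxconf_tens :
  is_maxconf (tens rho0) (tens rhox) (\prod_l e l) (\prod_l q l).
Proof.
have pq l : psd (q l *: rho0 l - e l *: rhox l) by case: (q_maxconf l).
split; first by apply/rpred_prod => l _; rewrite gtr0_real.
  by rewrite -!tensZ; apply: psd_tensB => l //; apply: psdZ; rewrite ?ltW.
move=> c c_real pc; rewrite real_leNgt ?rpred_prod // => [|l _]; last by rewrite gtr0_real.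
have P_gt0 : 0 < \prod_l q l by apply: prodr_gt0 => l _.
apply/negP => c_lt; have [s [s_ge0 s_lt1 c_lt_s]] := exists_pow_gap L c_real P_gt0 c_lt.
have s_real : s \is Num.real by rewrite ger0_real.
have not_dom l : exists v, quad (s * q l *: rho0 l - e l *: rhox l) v < 0.
  have sq_real : s * q l \is Num.real := realM s_real (gtr0_real (q_gt0 l)).
  apply: herm_not_psd.
    exact: psd_scaleB_herm (rho0_psd l) (rhox_psd l) sq_real (gtr0_real (e_gt0 l)).
  case: (q_maxconf l) => _ _ minq /(minq _ sq_real).
  by rewrite ler_pMl // => /(lt_le_trans s_lt1); rewrite ltxx.
pose v l := xchoose (not_dom l).
pose r l := quad (rho0 l) (v l); pose x l := quad (rhox l) (v l).
have r_lt l : s * q l * r l < e l * x l.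
  by have := xchooseP (not_dom l); rewrite quadB !quadZ subr_lt0.
have x_le l : e l * x l <= r l.
  by have := psd_quad_ge0 (v l) (rho0_dom l); rewrite quadB quadZ subr_ge0.
have sqr_ge0 l : 0 <= s * q l * r l.
  exact: mulr_ge0 (mulr_ge0 s_ge0 (ltW (q_gt0 l))) (psd_quad_ge0 _ (rho0_psd l)).
have r_gt0 l : 0 < r l := lt_le_trans (le_lt_trans (sqr_ge0 l) (r_lt l)) (x_le l).
have := psd_quad_ge0 (tensv v) pc; rewrite quadB !quadZ !quad_tensv subr_ge0.
have prod_le : \prod_l (s * q l * r l) <= \prod_l e l * \prod_l x l.
  rewrite -big_split; apply: ler_prod => l _.
  by rewrite sqr_ge0 ltW ?r_lt.
have prod_gt : c * \prod_l r l < \prod_l (s * q l * r l).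
  rewrite !big_split prodr_const card_ord /= ltr_pM2r //.
  by apply: prodr_gt0 => l _.
by move=> /(lt_le_trans (lt_le_trans prod_gt prod_le)); rewrite ltxx.
Qed.

End ProductEnsemble.
End MaxConfidence.

Section Ensemble.
Variables (C : numClosedFieldType) (n k : nat).
Variables (eta : 'I_k -> C) (rho : 'I_k -> 'M[C]_n).
Hypothesis eta_gt0 : forall i, 0 < eta i.
Hypothesis eta_sum : \sum_i eta i = 1.
Hypothesis rho_density : forall i, density (rho i).

Lemma tr_avg_state : \tr (avg_state eta rho) = 1.
Proof.
rewrite /avg_state raddf_sum /= -eta_sum; apply: eq_bigr => i _.
by rewrite mxtraceZ (proj2 (rho_density i)) mulr1.
Qed.

Lemma psd_partial_avg_state (P : pred 'I_k) :
  psd (\sum_(i | P i) eta i *: rho i).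
Proof. by apply: psd_sum => i _; apply: psdZ; [exact: ltW | case: (rho_density i)]. Qed.

Lemma psd_avg_state : psd (avg_state eta rho).
Proof. exact: psd_partial_avg_state. Qed.

Lemma psd_avg_state_sub x : psd (avg_state eta rho - eta x *: rho x).
Proof.
by rewrite /avg_state (bigD1 x) //= addrAC subrr add0r; exact: psd_partial_avg_state.
Qed.

Lemma is_maxconf_avg_gt0 x q :
  is_maxconf (avg_state eta rho) (rho x) (eta x) q -> 0 < q.
Proof.
case=> _ pq _; apply: lt_le_trans (eta_gt0 x) _.
by apply: psd_scaleB_tr pq; [exact: tr_avg_state | case: (rho_density x)].
Qed.

End Ensemble.

Theorem lemma5 (C : numClosedFieldType) (L : nat)
  (d n : 'I_L -> nat)
  (eta : forall l : 'I_L, 'I_(n l) -> C)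
  (rho : forall l : 'I_L, 'I_(n l) -> 'M[C]_(d l))
  (Heta_pos : forall l i, 0 < eta l i)
  (Heta_sum : forall l, \sum_(i < n l) eta l i = 1)
  (Hrho : forall l i, density (rho l i))
  (x : {dffun forall l : 'I_L, 'I_(n l)})
  (* maximum confidences C_{x_l}(E^l) of the component ensembles *)
  (Cl : 'I_L -> C)
  (HCl : forall l, is_maxconf (avg_state (eta l) (rho l)) (rho l (x l))
                              (eta l (x l)) (Cl l))
  (* maximum confidence C_x(E) of the sequence ensemble *)
  (Cs : C)
  (HCs : is_maxconf (tens (fun l => avg_state (eta l) (rho l)))
                    (tens (fun l => rho l (x l)))
                    (\prod_(l : 'I_L) eta l (x l)) Cs)
  (* Pi(E): projection onto the support of rho_0 *)
  (Pi : 'M[C]_(tdim d))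
  (HPi : proj_onto Pi (supp (tens (fun l => avg_state (eta l) (rho l)))))
  (* Pi^perp_{x_l}(E^l): projection onto the kernel of C rho_0^l - eta rho^l *)
  (Pperp : forall l : 'I_L, 'M[C]_(d l))
  (HPperp : forall l, proj_onto (Pperp l)
              (kern (Cl l *: avg_state (eta l) (rho l) - eta l (x l) *: rho l (x l))))
  (E : 'M[C]_(tdim d))
  (HE : Mset Cs (tens (fun l => avg_state (eta l) (rho l)))
                (tens (fun l => rho l (x l)))
                (\prod_(l : 'I_L) eta l (x l)) E) :
  tens Pperp *m Pi *m E *m Pi *m tens Pperp = Pi *m E *m Pi.
Proof.
set rho0 := fun l => avg_state (eta l) (rho l); set rhox := fun l => rho l (x l).
have prho0 l : psd (rho0 l) by apply: psd_avg_state.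
have prhox l : psd (rhox l) by case: (Hrho l (x l)).
have Cl_gt0 l : 0 < Cl l := is_maxconf_avg_gt0 (Heta_pos l) (Heta_sum l) (Hrho l) (HCl l).
have pdom l : psd (Cl l *: rho0 l - eta l (x l) *: rhox l) by case: (HCl l).
have CsE : Cs = \prod_l Cl l.
  apply: (is_maxconf_uniq HCs); apply: is_maxconf_tens => // l.
  exact: psd_avg_state_sub.
set M := Cs *: tens rho0 - \prod_l eta l (x l) *: tens rhox.
have pM : psd M by case: HCs.
have [pE trE] := HE; have [hPi PiPi Psupp] := HPi.
apply: (proj_sandwich (M := M)) => //.
- by rewrite adjmx_tens; apply: eq_tens => l; case: (HPperp l).
- exact: psd_herm.
- apply: proj_supp_mulmx HPi _ => [|z]; first exact/psd_herm/psd_tens.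
  by apply: psd_scaleB_ker => //; [exact: psd_tens | exact: prodr_gt0].
- exact: psd_mulmx_eq0 pM pE trE.
move=> z /Psupp [w ->]; rewrite /M CsE -!tensZ => Mz0.
by apply: (tens_ker_proj_fixed (c := Cl)) Mz0 => // l; apply: psdZ; rewrite ?ltW.
Qed.
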